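(* Let $V$ be a ground model, $\kappa$ an infinite cardinal, and $\mathbb{A}\in V$ an atomless Boolean algebra. If $\dot{\mathcal{U}}$ and $\dot{\mathcal{V}}$ are $\mathbb{M}_\kappa$-names for ultrafilters on $\mathbb{A}$ such that $\Vdash_{\mathbb{M}_\kappa}\dot{\mathcal{U}}\neq\dot{\mathcal{V}}$, then for every $\varepsilon>0$ there are $p\in\mathbb{M}_\kappa$ and $C\in\mathbb{A}$ such that $\lambda_\kappa(p)>1/4-\varepsilon$ and $p\Vdash C\in\dot{\mathcal{U}}\triangle\dot{\mathcal{V}}$.
   Context: $\mathbb{M}_\kappa=Bor(2^\kappa)/\mathcal{N}_\kappa$ is the measure algebra of the standard product measure $\lambda_\kappa$ on $2^\kappa$ ($\lambda_\kappa$ also denotes the induced strictly positive measure on $\mathbb{M}_\kappa$), used as a forcing notion. An $\mathbb{M}_\kappa$-name for an ultrafilter on $\mathbb{A}$ is a name $\dot{\mathcal{U}}$ with $\Vdash_{\mathbb{M}_\kappa}$ ''$\dot{\mathcal{U}}$ is an ultrafilter on $\mathbb{A}$''. *)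

From HB Require Import structures.
From Stdlib Require Lists.List.
From mathcomp Require Import all_boot all_order all_algebra.
From mathcomp Require Import all_classical all_reals all_analysis.
Set Implicit Arguments. Unset Strict Implicit. Unset Printing Implicit Defensive.
Import Order.TTheory GRing.Theory Num.Theory.
Local Open Scope classical_set_scope.
Local Open Scope ring_scope.

Definition cyl (K : Type) : set (set (K -> bool)) :=
  [set A | exists (i : K) (b : bool), A = [set f | f i = b]].

Definition cantor_cube (K : Type) := g_sigma_algebraType (@cyl K).

(* lam is the standard product measure lambda_K on 2^K: every basic cylinder
   fixing n distinct coordinates has measure 2^-n (this determines lam uniquely). *)
Definition std_product_measure (R : realType) (K : Type)
  (lam : {measure set (cantor_cube K) -> \bar R}) : Prop :=
  forall (s : seq K) (b : K -> bool), Stdlib.Lists.List.NoDup s ->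
    lam [set f : cantor_cube K | forall i, Stdlib.Lists.List.In i s -> f i = b i]
      = ((2 ^-1) ^+ size s)%:E.

(* X <= Y in the measure algebra M_K (inclusion modulo lam-null sets). *)
Definition mle (R : realType) (K : Type)
  (lam : {measure set (cantor_cube K) -> \bar R}) (X Y : set (cantor_cube K)) :=
  lam (X `\` Y) = 0%E.

Definition symdiff (T : Type) (X Y : set T) : set T := (X `\` Y) `|` (Y `\` X).

Definition atomless (d : Order.disp_t) (A : ctbDistrLatticeType d) : Prop :=
  forall a : A, a != \bot%O -> exists b : A, (\bot < b < a)%O.

(* An M_K-name for an ultrafilter on A (A in the ground model), represented by its
   Boolean values u a = [[ a-check \in U ]] (elements of M_K, given by measurable
   representatives); the condition says that
   ||- "U is an ultrafilter on A" holds, i.e. each ultrafilter axiom has Boolean value 1. *)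
Definition ultrafilter_name (R : realType) (K : Type)
  (lam : {measure set (cantor_cube K) -> \bar R})
  (d : Order.disp_t) (A : ctbDistrLatticeType d) (u : A -> set (cantor_cube K)) : Prop :=
  (forall a, measurable (u a)) /\
  [/\       mle lam setT (u \top%O),
      mle lam (u \bot%O) set0,
      (forall a b, mle lam (u a `&` u b) (u (Order.meet a b))),
      (forall a b, (a <= b)%O -> mle lam (u a) (u b))
    & (forall a, mle lam setT (u a `|` u (Order.compl a)))].

(* ||- U <> V :  the Boolean value  sup_a [[ a \in U triangle V ]]  equals 1 in M_K,
   i.e. no nonzero condition is incompatible with every [[a \in U triangle V]]. *)
Definition forces_neq (R : realType) (K : Type)
  (lam : {measure set (cantor_cube K) -> \bar R})
  (d : Order.disp_t) (A : ctbDistrLatticeType d) (u v : A -> set (cantor_cube K)) : Prop :=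
  forall p : set (cantor_cube K), measurable p ->
    (forall a, lam (p `&` symdiff (u a) (v a)) = 0%E) -> lam p = 0%E.

From HB Require Import structures.
From mathcomp Require Import all_boot all_order all_algebra.
From mathcomp Require Import all_classical all_reals all_analysis.
From mathcomp Require Import lra.

(* Write D a for the symmetric difference of the Boolean values of a \in U and
   a \in V.  Almost everywhere the traces of U and V are ultrafilters, so
   D (a xor b) almost contains D a (+) D b.  Comparing D c with D (c xor a) then
   shows that every finite union of D's has measure at most twice that of a
   single D c.  If every D c had measure at most 1/4 - eps, all finite unions
   would have measure at most 1/2 - 2 eps, hence so would a countable union E
   exhausting their supremum; every D b \ E is then null, so ||- U <> V makes
   the complement of E null, which is absurd. *)
Import Order.TTheory Order.CTheory GRing.Theory Num.Theory.
Local Open Scope classical_set_scope.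
Local Open Scope ring_scope.

#[local] Hint Extern 0 (measurable (_ `&` _)) => solve [apply: measurableI; done] : core.
#[local] Hint Extern 0 (measurable (_ `|` _)) => solve [apply: measurableU; done] : core.
#[local] Hint Extern 0 (measurable (_ `\` _)) => solve [apply: measurableD; done] : core.
#[local] Hint Extern 0 (measurable (~` _)) => solve [apply: measurableC; done] : core.

Lemma le0_of_lt_natSinv (R : archiRealFieldType) (x : R) :
  (forall n, x < n.+1%:R^-1) -> x <= 0.
Proof.
move=> x_lt; rewrite leNgt; apply/negP => x_gt0.
have [N _ /(_ N (leqnn N)) /=] := near_infty_natSinv_lt (PosNum x_gt0).
by move/lt_trans/(_ (x_lt N)); rewrite ltxx.
Qed.

Definition fmeasure {d} {T : measurableType d} {R : realType}
  (mu : {measure set T -> \bar R}) (X : set T) : R := fine (mu X).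

Section FineMeasure.
Context {d} {T : measurableType d} {R : realType} {mu : {measure set T -> \bar R}}.
Hypothesis mu_fin : (mu setT < +oo)%E.
Implicit Types X Y : set T.
Local Notation fmeasure := (fmeasure mu).

Lemma fmeasureE {X} : measurable X -> mu X = (fmeasure X)%:E.
Proof.
move=> mX; rewrite fineK // ge0_fin_numE ?measure_ge0 //.
by apply: le_lt_trans mu_fin; apply: le_measure; rewrite ?inE.
Qed.

Lemma fmeasure_ge0 X : 0 <= fmeasure X.
Proof. exact/fine_ge0/measure_ge0. Qed.

Lemma fmeasure0 : fmeasure set0 = 0.
Proof. by rewrite /fmeasure measure0. Qed.

Lemma le_fmeasure {X Y} : measurable X -> measurable Y -> X `<=` Y ->
  fmeasure X <= fmeasure Y.
Proof. by move=> mX mY XY; rewrite -lee_fin -!fmeasureE // le_measure ?inE. Qed.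

Lemma fmeasureU2 {X Y} : measurable X -> measurable Y ->
  fmeasure (X `|` Y) <= fmeasure X + fmeasure Y.
Proof. by move=> mX mY; rewrite -lee_fin EFinD -!fmeasureE ?measureU2. Qed.

Lemma fmeasureU {X Y} : measurable X -> measurable Y -> X `&` Y = set0 ->
  fmeasure (X `|` Y) = fmeasure X + fmeasure Y.
Proof. by move=> mX mY XY0; apply/EFin_inj; rewrite EFinD -!fmeasureE ?measureU. Qed.

Lemma fmeasureDI {X Y} : measurable X -> measurable Y ->
  fmeasure X = fmeasure (X `\` Y) + fmeasure (X `&` Y).
Proof. by move=> mX mY; apply/EFin_inj; rewrite EFinD -!fmeasureE //; exact: measureDI. Qed.

Lemma fmeasureC {X} : measurable X -> fmeasure (~` X) = fmeasure setT - fmeasure X.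
Proof.
move=> mX; have := fmeasureU mX (measurableC mX) (setICr X).
by rewrite setUv => ->; rewrite addrAC subrr add0r.
Qed.

Lemma fmeasureUD {X Y} : measurable X -> measurable Y ->
  fmeasure (X `|` Y) = fmeasure X + fmeasure (Y `\` X).
Proof.
move=> mX mY; rewrite -(setDUK (@subsetUl _ X Y)) setDUl setDv set0U.
by rewrite fmeasureU // setDIK.
Qed.

Lemma fmeasure_eq0 {X} : measurable X -> fmeasure X = 0 -> mu X = 0%E.
Proof. by move=> mX; rewrite fmeasureE // => ->. Qed.

Lemma ae_le_fmeasure {X Y} : measurable X -> measurable Y ->
  {ae mu, forall w, X w -> Y w} -> fmeasure X <= fmeasure Y.
Proof.
move=> mX mY [N [mN N0 XYN]].
have XYN' : X `<=` Y `|` N.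
  move=> w Xw; have [Yw|nYw] := pselect (Y w); first by left.
  by right; apply: XYN => /(_ Xw).
apply: le_trans (le_fmeasure mX _ XYN') _ => //.
by apply: le_trans (fmeasureU2 mY mN) _; rewrite /fmeasure N0 addr0.
Qed.

Lemma fmeasure_bigcup_le (F : (set T)^nat) (c : R) :
  (forall n, measurable (F n)) -> nondecreasing_seq F ->
  (forall n, fmeasure (F n) <= c) -> fmeasure (\bigcup_n F n) <= c.
Proof.
move=> mF ndF Fc; have mU := bigcupT_measurable _ mF.
have F_cvg := nondecreasing_cvg_mu (mu := mu) mF mU ndF.
rewrite -lee_fin -fmeasureE // -(cvg_lim _ F_cvg) //.
apply: lime_le; first exact: cvgP F_cvg.
by apply: nearW => n /=; rewrite fmeasureE // lee_fin.
Qed.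

Lemma ae_cover_of_bounded_finite_unions {I : Type} {D : I -> set T} {r : R} :
  (forall i, measurable (D i)) ->
  (forall s, fmeasure (\big[setU/set0]_(i <- s) D i) <= r) ->
  exists E, [/\ measurable E, fmeasure E <= r & forall i, mu (D i `\` E) = 0%E].
Proof.
move=> mD W_le_r; pose W s := \big[setU/set0]_(i <- s) D i.
have mW s : measurable (W s) by exact: bigsetU_measurable.
pose S := sup (range (fmeasure \o W)).
have supS : has_sup (range (fmeasure \o W)).
  by split; [exists (fmeasure (W [::])), [::] | exists r => _ [s _ <-]; exact: W_le_r].
have W_le_S s : fmeasure (W s) <= S by apply: sup_upper_bound => //; exists s.
have S_le_r : S <= r.
  by apply: ge_sup; [case: supS | move=> _ [s _ <-]; exact: W_le_r].
have approx n : exists s, S - n.+1%:R^-1 < fmeasure (W s).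
  have n_gt0 : 0 < n.+1%:R^-1 :> R by rewrite invr_gt0.
  by have [_ [s _ <-]] := sup_adherent n_gt0 supS; exists s.
have [sn sn_gt] := choice approx.
pose F n := \big[setU/set0]_(k < n) W (sn k).
have F_W n : exists s, F n = W s.
  elim: n => [|n [s Fs]]; first by exists [::]; rewrite /F /W big_ord0 big_nil.
  by exists (s ++ sn n); rewrite /F big_ord_recr /= -/(F n) Fs /W big_cat.
have mF n : measurable (F n) by have [s ->] := F_W n.
have mE : measurable (\bigcup_n F n) by exact: bigcupT_measurable.
have ndF : nondecreasing_seq F.
  by move=> n m nm; apply/subsetPset; exact: (@subset_bigsetU _ (W \o sn) n m nm).
exists (\bigcup_n F n); split => //.
- apply: fmeasure_bigcup_le => // n; have [s ->] := F_W n.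
  exact: le_trans (W_le_S s) S_le_r.
move=> i; have DE_lt n : fmeasure (D i `\` \bigcup_n F n) < n.+1%:R^-1.
  have sub : D i `\` \bigcup_k F k `<=` D i `\` W (sn n).
    move=> w [Diw nEw]; split => // Ww; apply: nEw; exists n.+1 => //.
    by rewrite /F big_ord_recr /=; right.
  apply: le_lt_trans (le_fmeasure _ _ sub) _ => //.
  have := W_le_S (i :: sn n); rewrite {1}/W big_cons -/(W (sn n)) setUC fmeasureUD //.
  by have := sn_gt n; move: n.+1%:R^-1 => e; lra.
apply: fmeasure_eq0 => //; apply/le_anti; rewrite fmeasure_ge0 andbT.
exact: le0_of_lt_natSinv.
Qed.

Section SymdiffClosedFamily.
Context {I : Type} (i0 : I) {op : I -> I -> I} {D : I -> set T}.
Hypothesis mD : forall i, measurable (D i).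
Hypothesis D_op : forall i j,
  {ae mu, forall w, symdiff (D i) (D j) w -> D (op i j) w}.

Lemma fmeasure_bigsetU_le_twice (s : seq I) (G : set T) : measurable G ->
  exists c, fmeasure (\big[setU/set0]_(i <- s) D i `&` G) <= 2 * fmeasure (D c `&` G).
Proof.
elim: s G => [|a s IH] G mG.
  by exists i0; rewrite big_nil set0I fmeasure0 mulr_ge0 // fmeasure_ge0.
rewrite big_cons; set W := \big[setU/set0]_(i <- s) D i.
have mW : measurable W by exact: bigsetU_measurable.
have [c W_le] := IH (G `\` D a) (measurableD mG (mD a)).
have union_le :
    fmeasure ((D a `|` W) `&` G) <= fmeasure (D a `&` G) + fmeasure (W `&` (G `\` D a)).
  apply: le_trans (fmeasureU2 _ _) => //; apply: le_fmeasure => //.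
  move=> w [DaWw Gw]; have [Daw|nDaw] := pselect (D a w); first by left.
  by right; case: DaWw.
have Dc_split : fmeasure (D c `&` G) =
    fmeasure (D c `&` (G `\` D a)) + fmeasure (D c `&` G `&` D a).
  by rewrite setIDA; apply: fmeasureDI.
have Da_split : fmeasure (D a `&` G) =
    fmeasure (D a `&` G `\` D c) + fmeasure (D c `&` G `&` D a).
  rewrite (fmeasureDI (Y := D c)) //; congr (_ + fmeasure _).
  by apply/seteqP; split => w [[]].
have op_ge : fmeasure (D c `&` (G `\` D a)) + fmeasure (D a `&` G `\` D c)
    <= fmeasure (D (op c a) `&` G).
  rewrite -fmeasureU //; last by apply/seteqP; split => w // [[_ [_ ?]] [[? _] _]].
  apply: ae_le_fmeasure => //; apply: filterS (D_op c a) => w Dca.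
  by move=> [[Dcw [Gw nDaw]]|[[Daw Gw] nDcw]]; split => //; apply: Dca; [left|right].
(* With x, y, z the measures of D c `&` (G `\` D a), (D a `&` G) `\` D c and
   D c `&` G `&` D a, the union is bounded by y + z + 2x, D c `&` G has measure
   x + z and D (op c a) `&` G at least x + y. *)
have [le|lt] := leP (fmeasure (D (op c a) `&` G)) (fmeasure (D c `&` G)).
- by exists c; lra.
- by exists (op c a); lra.
Qed.

End SymdiffClosedFamily.

End FineMeasure.

Definition bxor {d} {A : ctbDistrLatticeType d} (a b : A) : A :=
  ((a `&` ~` b) `|` (~` a `&` b))%O.

Section UltrafilterName.
Context {R : realType} {K : Type} {lam : {measure set (cantor_cube K) -> \bar R}}.
Local Notation T := (cantor_cube K).

Lemma ae_of_mle {X Y : set T} : measurable X -> measurable Y -> mle lam X Y ->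
  {ae lam, forall w, X w -> Y w}.
Proof.
move=> mX mY XY0; exists (X `\` Y); split => // w /=.
by move=> /not_implyP.
Qed.

Context {d : Order.disp_t} {A : ctbDistrLatticeType d} {u : A -> set T}.
Hypothesis hu : ultrafilter_name lam u.
Implicit Types a b : A.

Let measurable_u a : measurable (u a). Proof. by case: hu. Qed.
#[local] Hint Resolve measurable_u : core.

Lemma ufname_meet a b : {ae lam, forall w, u (a `&` b)%O w <-> u a w /\ u b w}.
Proof.
case: hu => _ [_ _ meetU leU _].
apply: (filterS3 _ _ (ae_of_mle _ _ (meetU a b)) (ae_of_mle _ _ (leU _ _ (leIl a b)))
  (ae_of_mle _ _ (leU _ _ (leIr b a)))) => //= w; tauto.
Qed.

Lemma ufname_compl a : {ae lam, forall w, u (~` a)%O w <-> ~ u a w}.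
Proof.
case: hu => _ [_ botU _ _ ultraU].
apply: (filterS3 _ _ (ae_of_mle _ _ (ultraU a)) (ufname_meet a (~` a)%O) (ae_of_mle _ _ botU)) => //= w.
by rewrite meetxC; tauto.
Qed.

Lemma ufname_join a b : {ae lam, forall w, u (a `|` b)%O w <-> u a w \/ u b w}.
Proof.
near=> w.
have Cab : u (~` a `&` ~` b)%O w <-> ~ u (a `|` b)%O w.
  by near: w; rewrite -complU; exact: ufname_compl.
have Mab : u (~` a `&` ~` b)%O w <-> u (~` a)%O w /\ u (~` b)%O w.
  by near: w; exact: ufname_meet.
have Ca : u (~` a)%O w <-> ~ u a w by near: w; exact: ufname_compl.
have Cb : u (~` b)%O w <-> ~ u b w by near: w; exact: ufname_compl.
by case: (pselect (u (a `|` b)%O w)); case: (pselect (u a w)); case: (pselect (u b w)); tauto.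
Unshelve. all: by end_near.
Qed.

Lemma ufname_bxor a b : {ae lam, forall w, u (bxor a b) w <-> ~ (u a w <-> u b w)}.
Proof.
near=> w.
have J : u (bxor a b) w <-> u (a `&` ~` b)%O w \/ u (~` a `&` b)%O w.
  by near: w; exact: ufname_join.
have Ml : u (a `&` ~` b)%O w <-> u a w /\ u (~` b)%O w by near: w; exact: ufname_meet.
have Mr : u (~` a `&` b)%O w <-> u (~` a)%O w /\ u b w by near: w; exact: ufname_meet.
have Ca : u (~` a)%O w <-> ~ u a w by near: w; exact: ufname_compl.
have Cb : u (~` b)%O w <-> ~ u b w by near: w; exact: ufname_compl.
by case: (pselect (u a w)); case: (pselect (u b w)); tauto.
Unshelve. all: by end_near.
Qed.

End UltrafilterName.

Section TwoUltrafilterNames.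
Context {R : realType} {K : Type} {lam : {measure set (cantor_cube K) -> \bar R}}.
Context {d : Order.disp_t} {A : ctbDistrLatticeType d} {u v : A -> set (cantor_cube K)}.
Hypotheses (hu : ultrafilter_name lam u) (hv : ultrafilter_name lam v).

Lemma measurable_symdiff_names a : measurable (symdiff (u a) (v a)).
Proof. by case: hu hv => [mu _] [mv _]; apply: measurableU; apply: measurableD. Qed.

Lemma symdiff_names_bxor a b : {ae lam, forall w,
  symdiff (symdiff (u a) (v a)) (symdiff (u b) (v b)) w ->
  symdiff (u (bxor a b)) (v (bxor a b)) w}.
Proof.
near=> w.
have Xu : u (bxor a b) w <-> ~ (u a w <-> u b w) by near: w; exact: ufname_bxor.
have Xv : v (bxor a b) w <-> ~ (v a w <-> v b w) by near: w; exact: ufname_bxor.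
rewrite /symdiff /setD /setU /=.
by case: (pselect (u a w)); case: (pselect (u b w));
  case: (pselect (v a w)); case: (pselect (v b w)); tauto.
Unshelve. all: by end_near.
Qed.

End TwoUltrafilterNames.

Lemma std_product_measureT {R : realType} {K : Type}
    {lam : {measure set (cantor_cube K) -> \bar R}} :
  std_product_measure lam -> lam setT = 1%E.
Proof.
move=> /(_ [::] (fun=> true) (List.NoDup_nil _)); rewrite expr0 => <-.
by congr (lam _); apply/seteqP; split => // f _ i [].
Qed.

Theorem theorem7p6 (R : realType) (K : Type) (hK : infinite_set [set: K])
  (lam : {measure set (cantor_cube K) -> \bar R}) (hlam : std_product_measure lam)
  (d : Order.disp_t) (A : ctbDistrLatticeType d) (hA : atomless A)
  (u v : A -> set (cantor_cube K))
  (hu : ultrafilter_name lam u) (hv : ultrafilter_name lam v)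
  (huv : forces_neq lam u v) :
  forall eps : R, 0 < eps ->
    exists (p : set (cantor_cube K)) (C : A),
      [/\ measurable p, ((4 ^-1 - eps)%:E < lam p)%E
        & mle lam p (symdiff (u C) (v C))].
Proof.
move=> eps eps_gt0.
have lamT := std_product_measureT hlam.
have lam_fin : (lam setT < +oo)%E by rewrite lamT ltry.
pose D a := symdiff (u a) (v a).
have mD a : measurable (D a) := measurable_symdiff_names hu hv a.
have [[C lamC]|small] := pselect (exists C, ((4^-1 - eps)%:E < lam (D C))%E).
  by exists (D C), C; split => //; rewrite /mle setDv measure0.
have unions_le s : fmeasure lam (\big[setU/set0]_(a <- s) D a) <= 2 * (4^-1 - eps).
  have [c] := fmeasure_bigsetU_le_twice lam_fin \top%O mD
    (symdiff_names_bxor hu hv) s _ measurableT.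
  rewrite !setIT => /le_trans; apply; rewrite ler_pM2l // -lee_fin -fmeasureE //.
  by rewrite leNgt; apply/negP => ?; apply: small; exists c.
have [E [mE E_le null]] := ae_cover_of_bounded_finite_unions lam_fin mD unions_le.
have lamCE : lam (~` E) = 0%E by apply: huv => // b; rewrite setIC -setDE; exact: null.
have := fmeasureC lam_fin mE; rewrite /fmeasure lamCE lamT /= -/(fmeasure lam E).
lra.
Qed.
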